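(* Let $(M,d)$ be a pointed metric space and let $\mu\in ba(\widetilde{M})$ with Jordan decomposition $\mu=\mu^+-\mu^-$. The following are equivalent: (i) $\|\Phi^*\mu\|=\|\mu\|$. (ii) For every $\gamma\in(0,1)$ there exist a subset $A\subseteq\widetilde M$ and $f\in B_{\mathrm{Lip}_0(M)}$ such that $\mu^+(A)+\mu^-(\mathfrak{r}(A))\geq \gamma|\mu|(\widetilde M)$ and $f(m_{x,y})\geq\gamma$ for all $(x,y)\in A$. (iii) For every $\gamma\in(0,1)$ there exists a $\gamma$-cyclically monotonic subset $A\subseteq\widetilde M$ with $\mu^+(A)+\mu^-(\mathfrak{r}(A))\geq\gamma|\mu|(\widetilde M)$.
   Context: $(M,d)$ is a metric space with base point $0$; $\mathrm{Lip}_0(M)$ is the real Banach space of Lipschitz $f\colon M\to\mathbb R$ with $f(0)=0$, normed by the best Lipschitz constant, with closed unit ball $B_{\mathrm{Lip}_0(M)}$. $\widetilde M=\{(x,y)\in M\times M: x\neq y\}$, and $f(m_{x,y})=(f(x)-f(y))/d(x,y)$ for $(x,y)\in\widetilde M$. $\mathfrak r\colon\widetilde M\to\widetilde M$ is $\mathfrak r(x,y)=(y,x)$. $ba(\widetilde M)$ is the Banach space of bounded finitely additive signed measures on the power set of $\widetilde M$ with norm $\|\mu\|=|\mu|(\widetilde M)$ (this is the dual of $\ell_\infty(\widetilde M)$). The de Leeuw map $\Phi\colon\mathrm{Lip}_0(M)\to\ell_\infty(\widetilde M)$ is $\Phi f(x,y)=(f(x)-f(y))/d(x,y)$, a linear isometry;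 its adjoint gives $\Phi^*\mu\in\mathrm{Lip}_0(M)^*$, $(\Phi^*\mu)(f)=\int_{\widetilde M}\Phi f\,d\mu$. For $\gamma\in(0,1]$, $A\subseteq\widetilde M$ is $\gamma$-cyclically monotonic if for every finite sequence $(x_1,y_1),\dots,(x_n,y_n)\in A$, with $y_{n+1}=y_1$, $\sum_{i=1}^n\min\{d(x_i,y_{i+1})-\gamma d(x_i,y_i),\,d(y_i,y_{i+1})\}\ge 0$. *)

From HB Require Import structures.
From mathcomp Require Import all_boot all_order all_algebra.
From mathcomp Require Import classical_sets boolp reals.
Set Implicit Arguments. Unset Strict Implicit. Unset Printing Implicit Defensive.
Import Order.TTheory GRing.Theory Num.Theory.
Local Open Scope ring_scope.
Local Open Scope classical_set_scope.

Section Defs.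
Variable R : realType.

Definition is_metric (M : Type) (d : M -> M -> R) : Prop :=
  (forall x y, 0 <= d x y) /\ (forall x y, d x y = 0 <-> x = y) /\
  (forall x y, d x y = d y x) /\ (forall x y z, d x z <= d x y + d y z).

Definition Mt (M : Type) := {p : M * M | p.1 <> p.2}.

Definition rflip (M : Type) (p : Mt M) : Mt M :=
  exist (fun q : M * M => q.1 <> q.2) ((sval p).2, (sval p).1)
        (fun h => proj2_sig p (esym h)).

(** f(m_{x,y}) = (f x - f y)/d(x,y), i.e. the de Leeuw transform Phi f *)
Definition Phi (M : Type) (d : M -> M -> R) (f : M -> R) (p : Mt M) : R :=
  (f (sval p).1 - f (sval p).2) / d (sval p).1 (sval p).2.

Definition in_BLip0 (M : Type) (d : M -> M -> R) (x0 : M) (f : M -> R) : Prop :=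
  f x0 = 0 /\ forall x y, `|f x - f y| <= d x y.

(** ba(T): bounded finitely additive signed measures on the power set of T *)
Definition is_ba (T : Type) (mu : set T -> R) : Prop :=
  (exists C : R, forall A, `|mu A| <= C) /\
  (forall A B : set T, A `&` B = set0 -> mu (A `|` B) = mu A + mu B).

Definition mu_pos (T : Type) (mu : set T -> R) (A : set T) : R :=
  sup [set mu B | B in [set B | B `<=` A]].
Definition mu_neg (T : Type) (mu : set T -> R) (A : set T) : R :=
  sup [set - mu B | B in [set B | B `<=` A]].
Definition tvar (T : Type) (mu : set T -> R) (A : set T) : R :=
  mu_pos mu A + mu_neg mu A.
Definition ba_norm (T : Type) (mu : set T -> R) : R := tvar mu setT.

Definition is_partition (T : Type) (P : seq (set T)) : Prop :=
  (forall i j, (i < size P)%N -> (j < size P)%N -> i <> j ->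
     nth set0 P i `&` nth set0 P j = set0) /\
  (forall t, exists i, (i < size P)%N /\ nth set0 P i t).

Definition lower_sum (T : Type) (nu : set T -> R) (g : T -> R) (P : seq (set T)) : R :=
  \sum_(A <- P) inf (g @` A) * nu A.
Definition int_pos (T : Type) (nu : set T -> R) (g : T -> R) : R :=
  sup [set lower_sum nu g P | P in [set P | is_partition P]].
Definition ba_int (T : Type) (mu : set T -> R) (g : T -> R) : R :=
  int_pos (mu_pos mu) g - int_pos (mu_neg mu) g.

Definition Phistar_norm (M : Type) (d : M -> M -> R) (x0 : M) (mu : set (Mt M) -> R) : R :=
  sup [set `|ba_int mu (Phi d f)| | f in [set f | in_BLip0 d x0 f]].

Definition cyc_mon (M : Type) (d : M -> M -> R) (gamma : R) (A : set (Mt M)) : Prop :=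
  forall (n : nat) (p : 'I_n.+1 -> Mt M), (forall i, A (p i)) ->
    0 <= \sum_(i < n.+1)
      Num.min (d (sval (p i)).1 (sval (p (ordS i))).2 - gamma * d (sval (p i)).1 (sval (p i)).2)
              (d (sval (p i)).2 (sval (p (ordS i))).2).

End Defs.

From HB Require Import structures.
From mathcomp Require Import all_boot all_order all_algebra.
From mathcomp Require Import classical_sets boolp reals.
From mathcomp Require Import lra.

(** For f in the unit ball of Lip_0(M), Phi f takes values in [-1, 1] and is
    odd under the flip r.  Bounding the lower integrals of Phi f by step
    functions on the partitions {A, ~A} and {r(A), ~r(A)} shows, with
    S(A) = mu^+(A) + mu^-(r(A)), that
      |int Phi f dmu| <= S(A) + gamma (||mu|| - S(A))  for A = {Phi h >= gamma},
    where h is f or -f, and that int Phi f dmu >= (1 + gamma) S(A) - ||mu||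
    whenever Phi f >= gamma on A; letting gamma tend to 1 gives (i) <-> (ii).
    A set on which Phi f >= gamma is gamma-cyclically monotonic, because
    f(y_i) - f(y_(i+1)) is below both terms of the minimum and sums to zero
    around a cycle.  Conversely, for a gamma-cyclically monotonic A,
    Rockafellar's construction
      F(z) = sup over chains (x_0, y_0), ..., (x_n, y_n) in A of
             - d(0, y_0) + sum_i gamma d(x_i, y_i) - sum_(i<n) d(x_i, y_(i+1))
             - d(x_n, z)
    is 1-Lipschitz, is bounded by d(z, 0) by cyclic monotonicity (so that
    F(0) = 0), and satisfies F(x) >= F(y) + gamma d(x, y) on A. *)

Set Implicit Arguments. Unset Strict Implicit. Unset Printing Implicit Defensive.
Import Order.TTheory GRing.Theory Num.Theory.
Local Open Scope ring_scope.
Local Open Scope classical_set_scope.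

Section PositiveVariation.
Variables (R : realType) (T : Type) (m : set T -> R).
Hypothesis m_ba : is_ba m.
Local Notation nu := (mu_pos m).

Lemma ba_set0 : m set0 = 0.
Proof. by case: m_ba => _ /(_ set0 set0 (setI0 _)); rewrite setU0 => h; lra. Qed.

Lemma mu_pos_hub A : has_ubound [set m B | B in [set B | B `<=` A]].
Proof.
case: m_ba => -[C hC] _; exists C => _ [B _ <-].
exact: le_trans (ler_norm _) (hC B).
Qed.

Lemma le_mu_pos A B : B `<=` A -> m B <= nu A.
Proof. by move=> BA; apply: ub_le_sup; [exact: mu_pos_hub | exists B]. Qed.

Lemma ge_mu_pos A x : (forall B, B `<=` A -> m B <= x) -> nu A <= x.
Proof.
move=> h; apply: ge_sup; first by exists (m set0), set0 => //; exact: sub0set.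
by move=> _ [B BA <-]; exact: h.
Qed.

Lemma mu_pos_ge0 A : 0 <= nu A.
Proof. by rewrite -ba_set0; apply: le_mu_pos; exact: sub0set. Qed.

Lemma mu_pos0 : nu set0 = 0.
Proof.
apply/le_anti; rewrite mu_pos_ge0 andbT; apply: ge_mu_pos => B.
by rewrite subset0 => ->; rewrite ba_set0.
Qed.

Lemma mu_posU A B : A `&` B = set0 -> nu (A `|` B) = nu A + nu B.
Proof.
case: m_ba => _ m_add AB0; apply/le_anti/andP; split.
  apply: ge_mu_pos => D DAB.
  have -> : D = (D `&` A) `|` (D `&` B) by rewrite -setIUr; apply/esym/setIidPl.
  rewrite m_add; last by rewrite setIACA AB0 setI0.
  by apply: lerD; apply: le_mu_pos; exact: subIsetr.
rewrite -lerBrDl; apply: ge_mu_pos => B2 B2B; rewrite lerBrDl -lerBrDr.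
apply: ge_mu_pos => B1 B1A; rewrite lerBrDr -m_add; last first.
  exact: subsetI_eq0 B1A B2B AB0.
by apply: le_mu_pos; exact: setUSS.
Qed.

Lemma mu_pos_setIC A C : nu A = nu (A `&` C) + nu (A `&` ~` C).
Proof.
rewrite -mu_posU; last by rewrite setIACA setICr setI0.
by rewrite -setIUr setUCr setIT.
Qed.

Lemma mu_pos_setC C : nu setT = nu C + nu (~` C).
Proof. by rewrite (mu_pos_setIC _ C) !setTI. Qed.

Local Notation bigU P := (\big[@setU T/set0]_(A <- P) A).

Lemma nth_sub_bigU P i : (i < size P)%N -> nth set0 P i `<=` bigU P.
Proof.
elim: P i => [//|A P IH] [|i] /= hi; rewrite big_cons; first exact: subsetUl.
by apply: subset_trans (IH i hi) _; exact: subsetUr.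
Qed.

Lemma bigU_nth P t : bigU P t -> exists2 i, (i < size P)%N & nth set0 P i t.
Proof.
elim: P => [|A P IH]; first by rewrite big_nil.
by rewrite big_cons => -[At|/IH [i hi Pit]]; [exists 0%N | exists i.+1].
Qed.

Definition disjoint_seq (P : seq (set T)) :=
  forall i j, (i < size P)%N -> (j < size P)%N -> i <> j ->
    nth set0 P i `&` nth set0 P j = set0.

Lemma sum_mu_pos_disjoint P C : disjoint_seq P ->
  \sum_(A <- P) nu (A `&` C) = nu (C `&` bigU P).
Proof.
elim: P => [|A P IH] hP; first by rewrite !big_nil setI0 mu_pos0.
have hP' : disjoint_seq P by move=> i j hi hj hij; apply: (hP i.+1 j.+1) => // -[].
have AP0 : A `&` bigU P = set0.
  apply/seteqP; split => // t [At /bigU_nth [j hj Pjt]].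
  by rewrite -(hP 0%N j.+1).
rewrite !big_cons IH // setIUr [C `&` A]setIC mu_posU //.
exact: subsetI_eq0 (@subIsetl _ _ _) (@subIsetr _ _ _) AP0.
Qed.

Lemma sum_mu_pos_partition P C : is_partition P ->
  \sum_(A <- P) nu (A `&` C) = nu C.
Proof.
case=> disj cover; rewrite sum_mu_pos_disjoint //; congr nu; apply/setIidPl.
by move=> t _; have [i [hi Pit]] := cover t; exact: nth_sub_bigU hi _ Pit.
Qed.

End PositiveVariation.

Lemma partition_setC (T : Type) (C : set T) : is_partition [:: C; ~` C].
Proof.
split; first by move=> [|[|i]] [|[|j]] //= _ _ _; rewrite ?setICr ?setCK ?setICl.
by move=> t; have [Ct|nCt] := pselect (C t); [exists 0%N | exists 1%N].
Qed.

Section StepBounds.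
Variables (R : realType) (T : Type) (m : set T -> R) (g : T -> R) (K : R).
Hypotheses (m_ba : is_ba m) (g_bounded : forall t, `|g t| <= K).
Local Notation nu := (mu_pos m).

Let g_le t : g t <= K. Proof. by have := g_bounded t; rewrite ler_norml => /andP[]. Qed.
Let g_ge t : - K <= g t. Proof. by have := g_bounded t; rewrite ler_norml => /andP[]. Qed.

Lemma inf_image_le A t : A t -> inf (g @` A) <= g t.
Proof.
move=> At; apply: ge_inf; last by exists t.
by exists (- K) => _ [s _ <-].
Qed.

Lemma le_inf_image A a : A !=set0 -> (forall t, A t -> a <= g t) -> a <= inf (g @` A).
Proof.
move=> [t At] h; apply: lb_le_inf; first by exists (g t), t.
by move=> _ [s As <-]; exact: h.
Qed.

Lemma inf_mul_mu_pos_le A B a : (forall t, B t -> g t <= a) ->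
  inf (g @` A) * nu (A `&` B) <= a * nu (A `&` B).
Proof.
move=> h; have [[t [At Bt]]|/nonemptyPn->] := pselect (A `&` B !=set0).
  apply: ler_wpM2r; first exact: mu_pos_ge0.
  exact: le_trans (inf_image_le At) (h t Bt).
by rewrite mu_pos0 // !mulr0.
Qed.

Lemma mul_mu_pos_le_inf A a : (forall t, A t -> a <= g t) ->
  a * nu A <= inf (g @` A) * nu A.
Proof.
move=> h; have [A0|/nonemptyPn->] := pselect (A !=set0).
  by apply: ler_wpM2r; [exact: mu_pos_ge0 | exact: le_inf_image].
by rewrite mu_pos0 // !mulr0.
Qed.

Lemma lower_sum_le_step P C a b : is_partition P ->
  (forall t, C t -> g t <= a) -> (forall t, ~ C t -> g t <= b) ->
  lower_sum nu g P <= a * nu C + b * nu (~` C).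
Proof.
move=> hP ha hb; rewrite /lower_sum -(sum_mu_pos_partition m_ba C hP).
rewrite -(sum_mu_pos_partition m_ba (~` C) hP) !mulr_sumr -big_split /=.
apply: ler_sum => A _; rewrite (mu_pos_setIC m_ba A C) mulrDr.
by apply: lerD; apply: inf_mul_mu_pos_le.
Qed.

Lemma int_pos_le_step C a b :
  (forall t, C t -> g t <= a) -> (forall t, ~ C t -> g t <= b) ->
  int_pos nu g <= a * nu C + b * nu (~` C).
Proof.
move=> ha hb; apply: ge_sup => [|_ [P hP <-]]; last exact: lower_sum_le_step.
by exists (lower_sum nu g [:: C; ~` C]), [:: C; ~` C]; first exact: partition_setC.
Qed.

Lemma int_pos_ge_step C a b :
  (forall t, C t -> a <= g t) -> (forall t, ~ C t -> b <= g t) ->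
  a * nu C + b * nu (~` C) <= int_pos nu g.
Proof.
move=> ha hb; have hub : has_ubound [set lower_sum nu g P | P in [set P | is_partition P]].
  by exists (K * nu setT + K * nu (~` setT)) => _ [P hP <-]; exact: lower_sum_le_step.
apply: le_trans (ub_le_sup hub _); last by exists [:: C; ~` C]; first exact: partition_setC.
rewrite /lower_sum !big_cons big_nil addr0.
by apply: lerD; apply: mul_mu_pos_le_inf.
Qed.

Lemma abs_int_pos_le : `|int_pos nu g| <= K * nu setT.
Proof.
have := int_pos_le_step (C := setT) (fun t _ => g_le t) (fun t _ => g_le t).
have := int_pos_ge_step (C := setT) (fun t _ => g_ge t) (fun t _ => g_ge t).
by rewrite setCT mu_pos0 // !mulr0 !addr0 mulNr ler_norml => -> ->.
Qed.

End StepBounds.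

Lemma is_ba_opp (R : realType) (T : Type) (m : set T -> R) :
  is_ba m -> is_ba (fun A => - m A).
Proof.
case=> -[C hC] m_add; split; first by exists C => A; rewrite normrN.
by move=> A B AB0; rewrite m_add // opprD.
Qed.

Lemma mu_negE (R : realType) (T : Type) (m : set T -> R) :
  mu_neg m = mu_pos (fun A => - m A).
Proof. by []. Qed.

Section SignedStepBounds.
Variables (R : realType) (T : Type) (mu : set T -> R) (g : T -> R).
Hypotheses (mu_ba : is_ba mu) (g_le1 : forall t, `|g t| <= 1).

Let g_ge t : -1 <= g t. Proof. by have := g_le1 t; rewrite ler_norml => /andP[]. Qed.
Let g_le t : g t <= 1. Proof. by have := g_le1 t; rewrite ler_norml => /andP[]. Qed.
Let mu_neg_ba := is_ba_opp mu_ba.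

Lemma tvar_setT_split C D : tvar mu setT =
  mu_pos mu C + mu_pos mu (~` C) + (mu_neg mu D + mu_neg mu (~` D)).
Proof. by rewrite /tvar !mu_negE (mu_pos_setC mu_ba C) (mu_pos_setC mu_neg_ba D). Qed.

Lemma abs_ba_int_le : `|ba_int mu g| <= tvar mu setT.
Proof.
apply: le_trans (ler_normB _ _) _; rewrite /tvar mu_negE.
by apply: lerD; rewrite -[X in _ <= X]mul1r; exact: abs_int_pos_le.
Qed.

Lemma ba_int_ge_step C D c :
  (forall t, C t -> c <= g t) -> (forall t, D t -> g t <= - c) ->
  c * (mu_pos mu C + mu_neg mu D) - (mu_pos mu (~` C) + mu_neg mu (~` D))
    <= ba_int mu g.
Proof.
move=> hC hD; rewrite /ba_int mu_negE.
have := int_pos_ge_step mu_ba g_le1 hC (fun t _ => g_ge t).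
have := int_pos_le_step mu_neg_ba g_le1 hD (fun t _ => g_le t).
lra.
Qed.

Lemma ba_int_le_step C D c :
  (forall t, ~ C t -> g t <= c) -> (forall t, ~ D t -> - c <= g t) ->
  ba_int mu g <= mu_pos mu C + mu_neg mu D + c * (mu_pos mu (~` C) + mu_neg mu (~` D)).
Proof.
move=> hC hD; rewrite /ba_int mu_negE.
have := int_pos_le_step mu_ba g_le1 (fun t _ => g_le t) hC.
have := int_pos_ge_step mu_neg_ba g_le1 (fun t _ => g_ge t) hD.
lra.
Qed.

Lemma opp_ba_int_le_step C D c :
  (forall t, ~ C t -> - c <= g t) -> (forall t, ~ D t -> g t <= c) ->
  - ba_int mu g <= mu_pos mu C + mu_neg mu D + c * (mu_pos mu (~` C) + mu_neg mu (~` D)).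
Proof.
move=> hC hD; rewrite /ba_int mu_negE.
have := int_pos_ge_step mu_ba g_le1 (fun t _ => g_ge t) hC.
have := int_pos_le_step mu_neg_ba g_le1 (fun t _ => g_le t) hD.
lra.
Qed.

End SignedStepBounds.

Section LipschitzBall.
Variables (R : realType) (M : Type) (d : M -> M -> R) (x0 : M).
Hypothesis d_metric : is_metric d.
Local Notation r := (@rflip M).

Lemma metric_ge0 x y : 0 <= d x y. Proof. by case: d_metric. Qed.

Lemma metricC x y : d x y = d y x. Proof. by case: d_metric => _ [_ []]. Qed.

Lemma metric_triangle x y z : d x z <= d x y + d y z.
Proof. by case: d_metric => _ [_ [_]]. Qed.

Lemma metric_xx x : d x x = 0. Proof. by case: d_metric => _ [/(_ x x) [_ ->]]. Qed.

Lemma metric_gt0 (p : Mt M) : 0 < d (sval p).1 (sval p).2.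
Proof.
case: d_metric => _ [d0 _]; rewrite lt0r metric_ge0 andbT.
by apply/eqP => /d0; exact: (proj2_sig p).
Qed.

Lemma BLip0_le f x y : in_BLip0 d x0 f -> f x - f y <= d x y.
Proof. by case=> _ /(_ x y); rewrite ler_norml => /andP[]. Qed.

Lemma BLip0_0 : in_BLip0 d x0 (fun=> 0).
Proof. by split=> // x y; rewrite subr0 normr0 metric_ge0. Qed.

Lemma BLip0N f : in_BLip0 d x0 f -> in_BLip0 d x0 (fun x => - f x).
Proof. by case=> f0 hf; split=> [|x y]; rewrite ?f0 ?oppr0 // -opprD normrN. Qed.

Lemma rflipK : involutive r.
Proof. by case=> -[x y] h; congr exist; exact: Prop_irrelevance. Qed.

Lemma rflip_imageP (A : set (Mt M)) p : (r @` A) p <-> A (r p).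
Proof. by split=> [[q Aq <-]|Ap]; [rewrite rflipK | exists (r p); rewrite ?rflipK]. Qed.

Lemma Phi_rflip f p : Phi d f (r p) = - Phi d f p.
Proof. by rewrite /Phi /= metricC -mulNr opprB. Qed.

Lemma PhiN f p : Phi d (fun x => - f x) p = - Phi d f p.
Proof. by rewrite /Phi -mulNr opprB opprK addrC. Qed.

Lemma le_Phi f p c :
  (c <= Phi d f p) = (c * d (sval p).1 (sval p).2 <= f (sval p).1 - f (sval p).2).
Proof. by rewrite /Phi ler_pdivlMr // metric_gt0. Qed.

Lemma abs_Phi_le1 f p : in_BLip0 d x0 f -> `|Phi d f p| <= 1.
Proof.
case=> _ hf; have dp := metric_gt0 p.
by rewrite /Phi normrM normfV (gtr0_norm dp) ler_pdivrMr // mul1r.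
Qed.

Lemma cyc_mon_of_Phi_ge c A f : in_BLip0 d x0 f ->
  (forall p, A p -> c <= Phi d f p) -> cyc_mon d c A.
Proof.
move=> hf hA n q Aq.
have step i : f (sval (q i)).2 - f (sval (q (ordS i))).2 <=
   Num.min (d (sval (q i)).1 (sval (q (ordS i))).2 - c * d (sval (q i)).1 (sval (q i)).2)
           (d (sval (q i)).2 (sval (q (ordS i))).2).
  rewrite le_min BLip0_le // andbT.
  have := BLip0_le (sval (q i)).1 (sval (q (ordS i))).2 hf.
  have := hA _ (Aq i); rewrite le_Phi; lra.
apply: le_trans (ler_sum _ (fun i _ => step i)); rewrite sumrB.
by rewrite [X in X - _](reindex_inj (@ordS_inj n.+1)) subrr.
Qed.

End LipschitzBall.

Section CyclicPotential.
Variables (R : realType) (M : Type) (d : M -> M -> R) (x0 : M) (c : R).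
Variable A : set (Mt M).
Hypotheses (d_metric : is_metric d) (A_cyc : cyc_mon d c A).

(* Chains take values in M * M rather than Mt M so that the empty chain, of
   value - d(0, z), exists even when Mt M is empty. *)
Fixpoint chain_value (n : nat) (p : nat -> M * M) (z : M) : R :=
  if n is k.+1 then chain_value k p (p k).2 + c * d (p k).1 (p k).2 - d (p k).1 z
  else - d x0 z.

Definition chain_in (n : nat) (p : nat -> M * M) :=
  forall i, (i < n)%N -> (sval @` A) (p i).

Lemma chain_valueS n p z : chain_value n.+1 p z =
  - d x0 (p 0%N).2 + \sum_(i < n.+1) c * d (p i).1 (p i).2
  - \sum_(i < n) d (p i).1 (p i.+1).2 - d (p n).1 z.
Proof.
elim: n z => [|n IH] z; first by rewrite /= big_ord1 big_ord0; lra.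
rewrite -[LHS]/(chain_value n.+1 p _ + _ - _) IH !big_ord_recr /=; lra.
Qed.

Lemma eq_chain_value n p p' : (forall i, (i < n)%N -> p i = p' i) ->
  forall z, chain_value n p z = chain_value n p' z.
Proof.
elim: n => [//|n IH] pp' z /=.
by rewrite IH ?pp' // => i /ltnW; exact: pp'.
Qed.

Lemma chain_cyclic_sum_ge n p : chain_in n.+1 p ->
  \sum_(i < n.+1) c * d (p i).1 (p i).2 <=
  \sum_(i < n) d (p i).1 (p i.+1).2 + d (p n).1 (p 0%N).2.
Proof.
move=> hp; have /choice[q qP] : forall i : 'I_n.+1, exists q, A q /\ sval q = p i.
  by move=> i; have [q Aq qE] := hp i (ltn_ord i); exists q.
have cyc := A_cyc (fun i => (qP i).1).
have : 0 <= \sum_(i < n.+1) (d (p i).1 (p (ordS i)).2 - c * d (p i).1 (p i).2).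
  apply: le_trans cyc (ler_sum _ _) => i _; rewrite !(qP _).2.
  by rewrite ge_min lexx.
rewrite sumrB big_ord_recr /= modnn.
under eq_bigr => i _ do rewrite modn_small ?ltnS ?ltn_ord //.
lra.
Qed.

Lemma chain_value_le n p z : chain_in n p -> chain_value n p z <= d z x0.
Proof.
case: n => [/= _|n hp].
  by have := metric_ge0 d_metric x0 z; have := metric_ge0 d_metric z x0; lra.
rewrite chain_valueS; have := chain_cyclic_sum_ge hp.
have := metric_triangle d_metric (p n).1 z (p 0%N).2.
have := metric_triangle d_metric z x0 (p 0%N).2.
lra.
Qed.

Lemma chain_value_lip n p w z : chain_value n p w <= chain_value n p z + d w z.
Proof.
case: n => [|n] /=; last by have := metric_triangle d_metric (p n).1 w z; lra.
by have := metric_triangle d_metric x0 w z; lra.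
Qed.

Definition chain_values z :=
  [set r | exists n p, chain_in n p /\ chain_value n p z = r].

Definition potential z := sup (chain_values z).

Lemma chain_values_hub z : has_ubound (chain_values z).
Proof. by exists (d z x0) => _ [n [p [hp <-]]]; exact: chain_value_le. Qed.

Lemma chain_values_neq0 z : chain_values z !=set0.
Proof. by exists (- d x0 z), 0%N, (fun=> (x0, x0)). Qed.

Lemma le_potential n p z : chain_in n p -> chain_value n p z <= potential z.
Proof. by move=> hp; apply: ub_le_sup; [exact: chain_values_hub | exists n, p]. Qed.

Lemma potential_x0 : potential x0 = 0.
Proof.
apply/le_anti/andP; split.
  rewrite -(metric_xx d_metric x0); apply: ge_sup (chain_values_neq0 x0) _.
  by move=> _ [n [p [hp <-]]]; exact: chain_value_le.
by have := @le_potential 0%N (fun=> (x0, x0)) x0; rewrite /= metric_xx // oppr0; apply.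
Qed.

Lemma potential_lip w z : potential w <= potential z + d w z.
Proof.
apply: ge_sup (chain_values_neq0 w) _ => _ [n [p [hp <-]]].
exact: le_trans (chain_value_lip n p w z) (lerD (le_potential _ hp) (lexx _)).
Qed.

Lemma potential_BLip0 : in_BLip0 d x0 potential.
Proof.
split; first exact: potential_x0.
move=> w z; rewrite ler_norml; have := potential_lip w z; have := potential_lip z w.
rewrite (metricC d_metric z w); lra.
Qed.

Lemma potential_edge q : A q ->
  potential (sval q).2 + c * d (sval q).1 (sval q).2 <= potential (sval q).1.
Proof.
move=> Aq; rewrite -lerBrDr; apply: ge_sup (chain_values_neq0 _) _.
move=> _ [n [p [hp <-]]]; rewrite lerBrDr.
pose p' i := if i == n then sval q else p i.
have hp' : chain_in n.+1 p'.
  move=> i; rewrite ltnS leq_eqVlt /p'; case: eqP => [_ _|_ /hp //].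
  by exists q.
have agree i : (i < n)%N -> p i = p' i by move=> lt_in; rewrite /p' ltn_eqF.
have p'n : p' n = sval q by rewrite /p' eqxx.
apply: le_trans (le_potential _ hp').
by rewrite /= p'n -(eq_chain_value agree) metric_xx // subr0.
Qed.

Lemma le_Phi_potential q : A q -> c <= Phi d potential q.
Proof. by move=> Aq; rewrite le_Phi //; have := potential_edge Aq; lra. Qed.

End CyclicPotential.

Lemma le_of_forall_lt1 (R : realFieldType) (N P : R) : 0 <= N ->
  (forall c, 0 < c < 1 -> ((1 + c) * c - 1) * N <= P) -> N <= P.
Proof.
move=> N0 h; apply/ler_addgt0Pr => e e0.
have Ne0 : 0 < 3 * (N + e) by lra.
pose t := e / (3 * (N + e)).
have t0 : 0 < t by rewrite divr_gt0.
have et : t * (3 * (N + e)) = e by rewrite divfK // gt_eqF.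
have t1 : t < 1 by rewrite -(ltr_pM2r Ne0) mul1r et; lra.
have := h (1 - t); rewrite subr_gt0 t1 ltrBlDr ltrDl t0 => /(_ isT).
by nra.
Qed.

Section DeLeeuwNorm.
Variables (R : realType) (M : Type) (d : M -> M -> R) (x0 : M).
Variable mu : set (Mt M) -> R.
Hypotheses (d_metric : is_metric d) (mu_ba : is_ba mu).
Local Notation r := (@rflip M).
Local Notation N := (ba_norm mu).
Local Notation P := (Phistar_norm d x0 mu).

Definition flip_mass (A : set (Mt M)) := mu_pos mu A + mu_neg mu (r @` A).

Definition almost_norming := forall c : R, 0 < c < 1 ->
  exists (A : set (Mt M)) f, in_BLip0 d x0 f /\
    c * N <= flip_mass A /\ (forall p, A p -> c <= Phi d f p).

Lemma flip_mass_ge0 A : 0 <= flip_mass A.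
Proof.
by rewrite /flip_mass mu_negE addr_ge0 // mu_pos_ge0 //; exact: is_ba_opp.
Qed.

Lemma ba_norm_ge0 : 0 <= N.
Proof.
by rewrite /ba_norm /tvar mu_negE addr_ge0 // mu_pos_ge0 //; exact: is_ba_opp.
Qed.

Lemma abs_ba_int_Phi_le f : in_BLip0 d x0 f -> `|ba_int mu (Phi d f)| <= N.
Proof. by move=> hf; apply: abs_ba_int_le mu_ba (fun p => abs_Phi_le1 d_metric p hf). Qed.

Let Phi_ints_hub :
  has_ubound [set `|ba_int mu (Phi d f)| | f in [set f | in_BLip0 d x0 f]].
Proof. by exists N => _ [f hf <-]; exact: abs_ba_int_Phi_le. Qed.

Let Phi_ints_neq0 :
  [set `|ba_int mu (Phi d f)| | f in [set f | in_BLip0 d x0 f]] !=set0.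
Proof. by exists `|ba_int mu (Phi d (fun=> 0))|, (fun=> 0); first exact: BLip0_0. Qed.

Lemma Phistar_norm_le : P <= N.
Proof. by apply: ge_sup Phi_ints_neq0 _ => _ [f hf <-]; exact: abs_ba_int_Phi_le. Qed.

Lemma le_Phistar_norm f : in_BLip0 d x0 f -> `|ba_int mu (Phi d f)| <= P.
Proof. by move=> hf; apply: ub_le_sup; [exact: Phi_ints_hub | exists f]. Qed.

Lemma ba_int_Phi_ge c A f : in_BLip0 d x0 f -> (forall p, A p -> c <= Phi d f p) ->
  (1 + c) * flip_mass A - N <= ba_int mu (Phi d f).
Proof.
move=> hf hA; have hrA p : (r @` A) p -> Phi d f p <= - c.
  by move=> /rflip_imageP /hA; rewrite (Phi_rflip d_metric); lra.
have := ba_int_ge_step mu_ba (fun p => abs_Phi_le1 d_metric p hf) hA hrA.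
have := tvar_setT_split mu_ba A (r @` A); rewrite /flip_mass /ba_norm; nra.
Qed.

Lemma ba_int_Phi_le c f (A := [set p | c <= Phi d f p]) : in_BLip0 d x0 f ->
  ba_int mu (Phi d f) <= flip_mass A + c * (N - flip_mass A).
Proof.
move=> hf; have hA p : ~ A p -> Phi d f p <= c by move/negP; rewrite -ltNge => /ltW.
have hrA p : ~ (r @` A) p -> - c <= Phi d f p.
  by move/rflip_imageP/hA; rewrite (Phi_rflip d_metric); lra.
have := ba_int_le_step mu_ba (fun p => abs_Phi_le1 d_metric p hf) hA hrA.
have := tvar_setT_split mu_ba A (r @` A); rewrite /flip_mass /ba_norm; nra.
Qed.

Lemma opp_ba_int_Phi_le c f (A := [set p | c <= Phi d (fun x => - f x) p]) :
  in_BLip0 d x0 f -> - ba_int mu (Phi d f) <= flip_mass A + c * (N - flip_mass A).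
Proof.
move=> hf; have hA p : ~ A p -> - c <= Phi d f p.
  by move/negP; rewrite -ltNge PhiN ltrNl => /ltW.
have hrA p : ~ (r @` A) p -> Phi d f p <= c.
  by move/rflip_imageP/hA; rewrite (Phi_rflip d_metric); lra.
have := opp_ba_int_le_step mu_ba (fun p => abs_Phi_le1 d_metric p hf) hA hrA.
have := tvar_setT_split mu_ba A (r @` A); rewrite /flip_mass /ba_norm; nra.
Qed.

Lemma abs_ba_int_Phi_le_mass c f : in_BLip0 d x0 f ->
  exists2 h, in_BLip0 d x0 h & let A := [set p | c <= Phi d h p] in
    `|ba_int mu (Phi d f)| <= flip_mass A + c * (N - flip_mass A).
Proof.
move=> hf; have [I0|I0] := lerP 0 (ba_int mu (Phi d f)).
  by exists f => //; rewrite ger0_norm //; exact: ba_int_Phi_le.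
by exists (fun x => - f x); [exact: BLip0N | rewrite ltr0_norm //; exact: opp_ba_int_Phi_le].
Qed.

Lemma Phistar_norm_eq_of_almost_norming : almost_norming -> P = N.
Proof.
move=> hN; apply/le_anti; rewrite Phistar_norm_le /=.
apply: le_of_forall_lt1 ba_norm_ge0 _ => c /[dup] c01 /andP[c0 c1].
have [A [f [hf [hA hPhi]]]] := hN c c01.
have := ba_int_Phi_ge hf hPhi; have := le_Phistar_norm hf; rewrite ler_norml.
have := ba_norm_ge0; nra.
Qed.

Lemma almost_norming_of_Phistar_norm_eq : P = N -> almost_norming.
Proof.
move=> PN c /andP[c0 c1].
have [N0|Npos] := eqVneq N 0.
  exists set0, (fun=> 0); split; first exact: BLip0_0.
  by rewrite N0 mulr0 flip_mass_ge0.
have {}Npos : 0 < N by rewrite lt0r Npos ba_norm_ge0.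
have eps0 : 0 < (1 - c) ^+ 2 * N by rewrite mulr_gt0 // exprn_gt0 // subr_gt0.
have [_ [f hf <-]] := sup_adherent eps0 (conj Phi_ints_neq0 Phi_ints_hub).
rewrite -/P PN => Nf; have [h hh /= hmass] := abs_ba_int_Phi_le_mass c hf.
exists [set p | c <= Phi d h p], h; split=> //; split=> //.
have := flip_mass_ge0 [set p | c <= Phi d h p]; nra.
Qed.

End DeLeeuwNorm.

Theorem theorem2p3 (R : realType) (M : Type) (d : M -> M -> R) (x0 : M)
  (hd : is_metric d) (mu : set (Mt M) -> R) (hmu : is_ba mu) :
  (Phistar_norm d x0 mu = ba_norm mu <->
   (forall gamma : R, 0 < gamma < 1 ->
      exists (A : set (Mt M)) (f : M -> R), in_BLip0 d x0 f /\
        mu_pos mu A + mu_neg mu (@rflip M @` A) >= gamma * tvar mu setT /\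
        (forall p, A p -> Phi d f p >= gamma))) /\
  ((forall gamma : R, 0 < gamma < 1 ->
      exists (A : set (Mt M)) (f : M -> R), in_BLip0 d x0 f /\
        mu_pos mu A + mu_neg mu (@rflip M @` A) >= gamma * tvar mu setT /\
        (forall p, A p -> Phi d f p >= gamma)) <->
   (forall gamma : R, 0 < gamma < 1 ->
      exists A : set (Mt M), cyc_mon d gamma A /\
        mu_pos mu A + mu_neg mu (@rflip M @` A) >= gamma * tvar mu setT)).
Proof.
split; split.
- exact: almost_norming_of_Phistar_norm_eq.
- exact: Phistar_norm_eq_of_almost_norming.
- move=> h c c01; have [A [f [hf [hA hPhi]]]] := h c c01.
  by exists A; split=> //; exact: cyc_mon_of_Phi_ge hf hPhi.
- move=> h c c01; have [A [A_cyc hA]] := h c c01.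
  exists A, (potential d x0 c A); split; first exact: potential_BLip0.
  by split=> // q; exact: le_Phi_potential.
Qed.
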